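(* Let $f:\mathbb{N}\to\mathbb{R}$ satisfy $f\in\Omega(\ell)$, i.e., there are $\gamma>0$ and $\ell_0$ with $f(\ell)\ge\gamma\ell$ for all $\ell\ge\ell_0$. Then there is a constant $\delta>0$ (depending only on $f$) such that for every instance $(A,C,k)$ and every committee $W$ that is affordable and $f$-representative, every AV-completion of $W$ has utilitarian ratio at least $\delta/\sqrt{k}$.
   Context: An instance $(A,C,k)$ consists of a finite nonempty candidate set $C$, voters $N=\{1,\dots,n\}$, approval sets $A_i\subseteq C$, and a committee size $1\le k\le |C|$. $N_c=\{i: c\in A_i\}$. A committee is $W\subseteq C$ with $|W|\le k$. $\mathrm{sw}(W)=\sum_i|A_i\cap W|$; the utilitarian ratio of $W$ is $\mathrm{sw}(W)/\max\{\mathrm{sw}(W'):|W'|=k\}$. An AV-completion of $W$ is $W\cup T$ where $T\subseteq C\setminus W$, $|T|=k-|W|$, and $T$ maximizes $\sum_{c\in T}|N_c|$ among such sets. $W$ is affordable if there are $p_i:C\to\mathbb{R}_{\ge0}$ with $p_i(c)=0$ for $c\notin A_i$, $\sum_c p_i(c)\le k/n$, $\sum_i p_i(c)=1$ for $c\in W$, $\sum_i p_i(c)=0$ for $c\notin W$. $W$ is $f$-representative if for every $c\notin W$, every $\ell\in\{1,\dots,k\}$ and every $N'\subseteq N_c$ with $|N'|\ge \ell n/k$, $\frac{1}{|N'|}\sum_{i\in N'}|A_i\cap W|\ge f(\ell)$. *)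

From HB Require Import structures.
From mathcomp Require Import all_boot all_order all_algebra.
From mathcomp Require Import reals.
Set Implicit Arguments. Unset Strict Implicit. Unset Printing Implicit Defensive.
Import Order.TTheory GRing.Theory Num.Theory.
Local Open Scope ring_scope.

Definition supporters (C : finType) (n : nat) (A : 'I_n -> {set C}) (c : C)
  : {set 'I_n} := [set i | c \in A i].

Definition sw (C : finType) (n : nat) (A : 'I_n -> {set C}) (W : {set C}) : nat :=
  (\sum_(i < n) #|A i :&: W|)%N.

Definition opt_sw (C : finType) (n : nat) (A : 'I_n -> {set C}) (k : nat) : nat :=
  (\max_(W' : {set C} | #|W'| == k) sw A W')%N.

Definition av_score (C : finType) (n : nat) (A : 'I_n -> {set C}) (T : {set C}) : nat :=
  (\sum_(c in T) #|supporters A c|)%N.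

Definition AV_completion (C : finType) (n : nat) (A : 'I_n -> {set C}) (k : nat)
  (W W2 : {set C}) : Prop :=
  exists T : {set C},
    [/\ W2 = W :|: T, T \subset ~: W, #|T| = (k - #|W|)%N &
      forall T' : {set C}, T' \subset ~: W -> #|T'| = (k - #|W|)%N ->
        (av_score A T' <= av_score A T)%N].

Definition affordable (R : realType) (C : finType) (n : nat) (A : 'I_n -> {set C})
  (k : nat) (W : {set C}) : Prop :=
  exists p : 'I_n -> C -> R,
    [/\ forall i c, 0 <= p i c,
        forall i c, c \notin A i -> p i c = 0,
        forall i, \sum_(c : C) p i c <= k%:R / n%:R,
        forall c, c \in W -> \sum_(i < n) p i c = 1 &
        forall c, c \notin W -> \sum_(i < n) p i c = 0].

Definition f_representative (R : realType) (f : nat -> R) (C : finType) (n : nat)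
  (A : 'I_n -> {set C}) (k : nat) (W : {set C}) : Prop :=
  forall c : C, c \notin W ->
  forall l : nat, (1 <= l <= k)%N ->
  forall N' : {set 'I_n}, N' \subset supporters A c ->
    (l%:R * n%:R / k%:R : R) <= #|N'|%:R ->
    f l <= (#|N'|%:R)^-1 * (\sum_(i in N') #|A i :&: W|)%:R.

From HB Require Import structures.
From mathcomp Require Import all_boot all_order all_algebra.
From mathcomp Require Import reals.
From mathcomp Require Import zify lra.
Import Order.TTheory GRing.Theory Num.Theory.

(* Write the AV-completion as W2 = W u T, let s be the largest support |N_c|
   of a candidate c outside W, and a = sw(W).  An optimal committee beats W2
   only through at most |W| further outside candidates, so
   OPT <= sw(W2) + |W| s.  Affordability gives |W| n <= k a, since each c in W
   is paid for by its supporters out of budgets k/n.  With L = max(1, l0), if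
   s k < L n this already yields |W| s <= L a.  Otherwise f-representativeness
   at level l = floor(s k / n) >= L gives a >= f(l) s >= gamma l s, while
   s k <= 2 l n; combining, gamma |W| s^2 <= 2 a^2, and as |W| <= k,
   |W| s <= sqrt(2/gamma) sqrt(k) a.  Hence
   OPT <= (1 + L + sqrt(2/gamma)) sqrt(k) sw(W2). *)

Set Implicit Arguments.
Unset Strict Implicit.
Unset Printing Implicit Defensive.

Lemma exists_card_between (T : finType) (Y B : {set T}) (m : nat) :
  Y \subset B -> #|Y| <= m <= #|B| ->
  exists Z : {set T}, [/\ Y \subset Z, Z \subset B & #|Z| = m].
Proof.
move=> YB; elim: m => [|m IHm] /andP[Ym mB].
  by exists Y; rewrite subxx YB; move: Ym; rewrite leqn0 => /eqP.
have [YSm | YneSm] := eqVneq #|Y| m.+1; first by exists Y; rewrite subxx YB.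
have [Z [YZ ZB cZ]] : exists Z : {set T}, [/\ Y \subset Z, Z \subset B & #|Z| = m].
  by apply: IHm; rewrite (ltnW mB) andbT -ltnS ltn_neqAle YneSm.
have [x] : exists x, x \in B :\: Z.
  by apply/set0Pn; rewrite -card_gt0 cardsD (setIidPr ZB) cZ subn_gt0.
rewrite inE => /andP[xZ xB].
exists (x |: Z); split; first exact: subset_trans YZ (subsetUr _ _).
  by rewrite subUset sub1set xB ZB.
by rewrite cardsU1 xZ cZ.
Qed.

Section ApprovalScores.

Variables (C : finType) (n : nat) (A : 'I_n -> {set C}).

Definition top_support (W : {set C}) : nat :=
  \max_(c | c \notin W) #|supporters A c|.

Lemma card_supporters (c : C) : #|supporters A c| = \sum_(i < n) (c \in A i).
Proof. by rewrite -sum1_card big_mkcond; apply: eq_bigr => i _; rewrite inE. Qed.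

Lemma sw_av_score (X : {set C}) : sw A X = av_score A X.
Proof.
rewrite /sw /av_score; under [RHS]eq_bigr => c _ do rewrite card_supporters.
rewrite exchange_big; apply: eq_bigr => i _.
rewrite -sum1_card big_mkcond [RHS]big_mkcond; apply: eq_bigr => c _.
by rewrite !inE; case: (c \in X); rewrite ?andbF ?andbT.
Qed.

Lemma av_scoreU (X Y : {set C}) :
  [disjoint X & Y] -> av_score A (X :|: Y) = av_score A X + av_score A Y.
Proof. by move=> dXY; rewrite /av_score -bigU //; apply: eq_bigl => c; rewrite !inE. Qed.

Lemma av_score_subset (X Y : {set C}) : X \subset Y -> av_score A X <= av_score A Y.
Proof. by move=> /setIidPr XY; rewrite /av_score [leqRHS](big_setID X) XY leq_addr. Qed.

Lemma av_score_le_top_support (W Y : {set C}) :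
  Y \subset ~: W -> av_score A Y <= #|Y| * top_support W.
Proof.
move=> /subsetP YW; rewrite /av_score /top_support -sum_nat_const; apply: leq_sum => c /YW.
by rewrite inE => cW; exact: leq_bigmax_cond.
Qed.

Section Completion.

Variables (k : nat) (W T : {set C}).
Hypothesis kC : k <= #|C|.
Hypothesis T_max : forall T' : {set C}, T' \subset ~: W -> #|T'| = k - #|W| ->
  av_score A T' <= av_score A T.

Lemma av_score_le_completion (Y : {set C}) :
  Y \subset ~: W -> #|Y| <= k - #|W| -> av_score A Y <= av_score A T.
Proof.
move=> YW cY.
have [Y' [YY' Y'W cY']] : exists Y' : {set C},
    [/\ Y \subset Y', Y' \subset ~: W & #|Y'| = k - #|W|].
  by apply: exists_card_between; rewrite // cY; have := cardsC W; lia.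
exact: leq_trans (av_score_subset YY') (T_max Y'W cY').
Qed.

(* An optimal committee splits into its part inside W, at most k - |W| outside
   candidates (dominated by T), and at most |W| further outside candidates. *)
Lemma opt_sw_le_completion :
  opt_sw A k <= av_score A W + av_score A T + #|W| * top_support W.
Proof.
apply/bigmax_leqP => W' /eqP cW'.
rewrite sw_av_score /av_score (big_setID W) /= -addnA.
apply: leq_add; first exact: av_score_subset (subsetIr _ _).
set Z := W' :\: W.
have ZW : Z \subset ~: W by rewrite /Z setDE subsetIr.
have [X [_ XZ cX]] : exists X : {set C},
    [/\ set0 \subset X, X \subset Z & #|X| = minn #|Z| (k - #|W|)].
  by apply: exists_card_between; rewrite ?sub0set // cards0 geq_minl.
rewrite (big_setID X) /= (setIidPr XZ).
apply: leq_add.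
  by apply: av_score_le_completion; rewrite ?cX ?geq_minr // (subset_trans XZ).
apply: leq_trans (av_score_le_top_support (subset_trans (subsetDl _ _) ZW)) _.
rewrite leq_mul2r cardsD (setIidPr XZ) cX.
have : #|Z| <= k by rewrite -cW' subset_leq_card // subsetDl.
lia.
Qed.

End Completion.

End ApprovalScores.

Local Open Scope ring_scope.

Lemma product_le_sqrt_bound (F : realFieldType) (g M K k n w s a l : F) :
  0 < g -> 2 <= g * M ^+ 2 -> 0 <= M -> 0 <= K -> K ^+ 2 = k -> 0 < k -> 0 <= n ->
  0 <= w <= k -> 0 <= s -> 0 <= a ->
  w * n <= k * a -> g * l * s <= a -> s * k <= 2 * l * n ->
  w * s <= M * K * a.
Proof.
move=> g0 gM M0 K0 KK k0 n0 /andP[w0 wk] s0 a0 wn gls sk.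
(* k g w s^2 = g w s (s k) <= 2 (g l s) (w n) <= 2 k a^2, and (w s)^2 <= k w s^2. *)
have gws2 : g * (w * s ^+ 2) <= 2 * a ^+ 2.
  rewrite -(ler_pM2l k0).
  have gws0 : 0 <= g * w * s by rewrite !mulr_ge0 // ltW.
  have e1 : g * w * s * (s * k) <= g * w * s * (2 * l * n) by rewrite ler_wpM2l.
  have e2 : (g * l * s) * (w * n) <= a * (w * n) by rewrite ler_wpM2r ?mulr_ge0.
  have e3 : a * (w * n) <= a * (k * a) by rewrite ler_wpM2l.
  nra.
have ws2 : (w * s) ^+ 2 <= k * (w * s ^+ 2).
  by rewrite exprMn expr2 -mulrA ler_wpM2r // mulr_ge0 // sqr_ge0.
have : g * (w * s) ^+ 2 <= g * (M * K * a) ^+ 2.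
  have ka0 : 0 <= k * a ^+ 2 by rewrite mulr_ge0 ?sqr_ge0 // ltW.
  have e1 := ler_wpM2r ka0 gM.
  have e2 := ler_wpM2l (ltW g0) ws2.
  have e3 := ler_wpM2l (ltW k0) gws2.
  move: e1 e2 e3.
  rewrite !exprMn KK; nra.
rewrite ler_pM2l // ler_sqr ?nnegrE ?mulr_ge0 //.
Qed.

Section Committee.

Variables (R : realType) (C : finType) (n : nat) (A : 'I_n -> {set C}).
Variables (k : nat) (W : {set C}).

Lemma affordable_supporters (c : C) :
  (0 < n)%N -> affordable R A k W -> c \in W -> (n <= #|supporters A c| * k)%N.
Proof.
move=> n0 [p [p0 pA pS pW _]] cW.
have : 1 <= #|supporters A c|%:R * (k%:R / n%:R) :> R.
  rewrite -[leLHS](pW c cW) card_supporters natr_sum mulr_suml; apply: ler_sum => i _.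
  case ciA: (c \in A i); last by rewrite pA ?ciA // mul0r.
  rewrite mul1r; apply: le_trans (pS i).
  by rewrite (bigD1 c) //= lerDl sumr_ge0.
by rewrite mulrA ler_pdivlMr ?ltr0n // mul1r -natrM ler_nat.
Qed.

Lemma affordable_card_le :
  (0 < n)%N -> affordable R A k W -> (#|W| * n <= k * av_score A W)%N.
Proof.
move=> n0 aff; rewrite /av_score big_distrr -sum_nat_const.
by apply: leq_sum => c cW; rewrite /= mulnC affordable_supporters.
Qed.

Lemma f_representative_supporters (f : nat -> R) (c : C) (l : nat) :
  f_representative f A k W -> c \notin W -> (1 <= l <= k)%N ->
  (l * n <= #|supporters A c| * k)%N -> (0 < #|supporters A c|)%N ->
  f l * #|supporters A c|%:R <= (av_score A W)%:R.
Proof.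
move=> frep cW lk lnk Nc0; have k0 : (0 < k)%N by case/andP: lk; apply: leq_trans.
have := frep c cW l lk (supporters A c) (subxx _).
rewrite ler_pdivrMr ?ltr0n // -!natrM (ler_nat R) => /(_ lnk).
rewrite mulrC -ler_pdivlMr ?ltr0n // => /le_trans; apply.
rewrite ler_pM2r ?invr_gt0 ?ltr0n // (ler_nat R) -sw_av_score.
rewrite [leqRHS](bigID [in supporters A c]) /=.
exact: leq_addr.
Qed.

Lemma card_mul_top_support_le (f : nat -> R) (g M : R) (L : nat) :
  0 < g -> 2 <= g * M ^+ 2 -> 0 <= M -> (0 < L)%N ->
  (forall l, (L <= l)%N -> g * l%:R <= f l) ->
  (0 < n)%N -> (0 < k)%N -> (#|W| <= k)%N ->
  affordable R A k W -> f_representative f A k W ->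
  (#|W| * top_support A W)%:R <= (L%:R + M * Num.sqrt k%:R) * (av_score A W)%:R.
Proof.
move=> g0 gM M0 L0 f_ge n0 k0 Wk aff frep.
set s := top_support A W; set a := av_score A W; set K := Num.sqrt k%:R.
have wn := affordable_card_le n0 aff.
have MKa0 : 0 <= M * K * a%:R by rewrite !mulr_ge0 ?sqrtr_ge0.
have [skLn | Lnsk] := ltnP (s * k) (L * n).
  have : (#|W| * s <= L * a)%N by rewrite -(leq_pmul2r k0); nia.
  by rewrite mulrDl -natrM -[leLHS]addr0 => wsLa; rewrite lerD // (ler_nat R).
have s0 : (0 < s)%N.
  by rewrite lt0n; apply: contraTneq Lnsk => ->; rewrite mul0n -ltnNge muln_gt0 L0.
have [c cW Ncs] : exists2 c, c \notin W & #|supporters A c| = s.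
  case: (pickP [pred c | c \notin W]) => [c0 c0W | noC]; last first.
    by move: s0; rewrite /s /top_support big_pred0.
  exists [arg max_(c > c0 | c \notin W) #|supporters A c|].
    by case: arg_maxnP.
  by rewrite /s /top_support (bigop.bigmax_eq_arg c0 c0W).
have sn : (s <= n)%N by rewrite -Ncs -[leqRHS]card_ord max_card.
pose l := (s * k %/ n)%N.
have Ll : (L <= l)%N by rewrite leq_divRL.
have lnk : (l * n <= s * k)%N := leq_divM _ _.
have skl : (s * k < l.+1 * n)%N := ltn_ceil _ n0.
have lk : (l <= k)%N.
  by rewrite -(leq_pmul2r n0) (leq_trans lnk) // mulnC leq_mul2l sn orbT.
have l1 : (1 <= l)%N := leq_trans L0 Ll.
have fls : f l * s%:R <= a%:R.
  by rewrite -Ncs f_representative_supporters // ?l1 ?lk ?Ncs.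
apply: le_trans (_ : M * K * a%:R <= _); last by rewrite mulrDl lerDr mulr_ge0.
rewrite natrM.
apply: (product_le_sqrt_bound (k := k%:R) (n := n%:R) (l := l%:R) g0 gM M0).
all: rewrite ?sqrtr_ge0 ?sqr_sqrtr ?ltr0n ?ler0n //=.
- by rewrite (ler_nat R).
- by rewrite -!natrM (ler_nat R).
- by apply: le_trans fls; rewrite ler_wpM2r // f_ge.
- have : (s * k <= 2 * l * n)%N by nia.
  by rewrite -(ler_nat R) !natrM.
Qed.

Lemma opt_sw_le_sqrt_sw (f : nat -> R) (g M : R) (L : nat) (W2 : {set C}) :
  0 < g -> 2 <= g * M ^+ 2 -> 0 <= M -> (0 < L)%N ->
  (forall l, (L <= l)%N -> g * l%:R <= f l) ->
  (0 < n)%N -> (1 <= k <= #|C|)%N -> (#|W| <= k)%N ->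
  affordable R A k W -> f_representative f A k W -> AV_completion A k W W2 ->
  (opt_sw A k)%:R <= (1 + L%:R + M) * Num.sqrt k%:R * (sw A W2)%:R.
Proof.
move=> g0 gM M0 L0 f_ge n0 /andP[k0 kC] Wk aff frep [T [-> TW _ T_max]].
have := card_mul_top_support_le g0 gM M0 L0 f_ge n0 k0 Wk aff frep.
have := opt_sw_le_completion kC T_max.
rewrite sw_av_score av_scoreU; last by rewrite disjoint_sym disjoints_subset.
rewrite -(ler_nat R) !natrD natrM.
set K := Num.sqrt k%:R; set a := (av_score A W)%:R; set t := (av_score A T)%:R.
move=> opt_le ws_le.
have K1 : 1 <= K by rewrite -sqrtr1 ler_wsqrtr // ler1n.
have a0 : 0 <= a by []; have t0 : 0 <= t by [].
have e1 : a + t <= K * (a + t) by rewrite ler_peMl // addr_ge0.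
have e2 : L%:R * a <= L%:R * K * (a + t).
  by rewrite -mulrA ler_wpM2l // (le_trans _ e1) // lerDl.
have e3 : M * K * a <= M * K * (a + t).
  by rewrite ler_wpM2l ?mulr_ge0 ?lerDl // (le_trans ler01 K1).
lra.
Qed.

End Committee.

Theorem corollary1 (R : realType) (f : nat -> R) :
  (exists gamma : R, 0 < gamma /\
     exists l0 : nat, forall l : nat, (l0 <= l)%N -> gamma * l%:R <= f l) ->
  exists delta : R, 0 < delta /\
    forall (C : finType) (n : nat) (A : 'I_n -> {set C}) (k : nat),
      (0 < n)%N -> (1 <= k <= #|C|)%N ->
      forall W : {set C}, (#|W| <= k)%N ->
        affordable R A k W -> f_representative f A k W ->
        forall W2 : {set C}, AV_completion A k W W2 ->
          delta / Num.sqrt (k%:R) * (opt_sw A k)%:R <= (sw A W2)%:R.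
Proof.
move=> [g [g0 [l0 f_ge]]].
pose L := maxn 1 l0; pose M := Num.sqrt (2 / g).
have gM : 2 <= g * M ^+ 2.
  by rewrite sqr_sqrtr ?divr_ge0 ?(ltW g0) // mulrC divfK // gt_eqF.
have f_geL l : (L <= l)%N -> g * l%:R <= f l.
  by move=> Ll; apply: f_ge; apply: leq_trans (leq_maxr 1 l0) Ll.
have M0 : 0 <= M := sqrtr_ge0 _.
have D0 : 0 < 1 + L%:R + M by have := ler0n R L; lra.
exists (1 + L%:R + M)^-1; split; first by rewrite invr_gt0.
move=> C n A k n0 kC W Wk aff frep W2 W2c.
have K0 : 0 < Num.sqrt (k%:R : R) by rewrite sqrtr_gt0 ltr0n; case/andP: kC.
rewrite -invfM mulrC ler_pdivrMr ?mulr_gt0 // mulrC.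
exact: opt_sw_le_sqrt_sw g0 gM M0 (leq_maxl 1 l0) f_geL n0 kC Wk aff frep W2c.
Qed.
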